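(* For $0\le a\le1/3$ let $R=\sqrt{a(4-3a)}$, $b=\tfrac12(2-a-R)$, $c=\tfrac12(2-a+R)$, and for $s\in\mathbb{R}$ define $$h(a,s)=(a+s(b-a))\bigl(c-(a+s(b-a))\bigr),$$ $$g(a,s)=3a(1-a)(1+s)+(9a^2-12a+2)s^2+\bigl(1-3a-(5-9a)s+(2-3a)s^2\bigr)R.$$ Then for $0\le a\le1/3$ and $0\le s\le1/2$: (i) $h(a,s)\le h(a,1-s)$; (ii) $g(a,s)\ge0$; and (iii) $g(a,s)+g(a,1-s)\ge0$. *)

From Stdlib Require Import Reals Lra.
Open Scope R_scope.

Definition Rr (a : R) : R := sqrt (a * (4 - 3 * a)).
Definition bb (a : R) : R := (2 - a - Rr a) / 2.
Definition cc (a : R) : R := (2 - a + Rr a) / 2.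

Definition h (a s : R) : R :=
  (a + s * (bb a - a)) * (cc a - (a + s * (bb a - a))).

Definition g (a s : R) : R :=
  3 * a * (1 - a) * (1 + s) + (9 * a ^ 2 - 12 * a + 2) * s ^ 2
  + (1 - 3 * a - (5 - 9 * a) * s + (2 - 3 * a) * s ^ 2) * Rr a.

(* After fixing the radical [r = Rr a], the inequalities are polynomial in [a], [r] and [s].
   For (i) the difference [h a (1 - s) - h a s] factors as [(1 - 2s)(2 - 3a - r)(r - a)/2],
   and [a <= r <= 2 - 3a] on [0, 1/3].  For (ii) and (iii), the conic [r^2 = a(4 - 3a)] is
   rationally parametrised by the slope [t = r/a], giving [a = 4/(3 + t^2)] with [t >= 3];
   after clearing the denominator [(3 + t^2)^2], [g] becomes a polynomial in [u = t - 3]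
   whose coefficients are nonnegative for [0 <= s <= 1/2]. *)
From Stdlib Require Import Reals Lra Psatz.
Open Scope R_scope.

Definition h_root (a r s : R) : R :=
  let b := (2 - a - r) / 2 in let c := (2 - a + r) / 2 in
  (a + s * (b - a)) * (c - (a + s * (b - a))).

Definition g_root (a r s : R) : R :=
  3 * a * (1 - a) * (1 + s) + (9 * a ^ 2 - 12 * a + 2) * s ^ 2
  + (1 - 3 * a - (5 - 9 * a) * s + (2 - 3 * a) * s ^ 2) * r.

Lemma h_root_Rr (a s : R) : h a s = h_root a (Rr a) s.
Proof. reflexivity. Qed.

Lemma g_root_Rr (a s : R) : g a s = g_root a (Rr a) s.
Proof. reflexivity. Qed.

Lemma Rr_nonneg (a : R) : 0 <= Rr a.
Proof. apply sqrt_pos. Qed.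

Lemma Rr_sqr (a : R) : 0 <= a <= 4 / 3 -> Rr a * Rr a = a * (4 - 3 * a).
Proof. intros Ha; apply sqrt_sqrt; nra. Qed.

(* [g_root] at the point [a = 4/(3 + t^2)], [r = t a] of the conic, times [(3 + t^2)^2]. *)
Definition g_rational (t s : R) : R :=
  12 * (t ^ 2 - 1) * (1 + s) + (18 - 36 * t ^ 2 + 2 * t ^ 4) * s ^ 2
  + 4 * t * (t ^ 2 - 9) - 4 * t * (5 * t ^ 2 - 21) * s + 4 * t * (2 * t ^ 2 - 6) * s ^ 2.

Lemma g_root_rational (t s : R) :
  g_root (4 / (3 + t ^ 2)) (t * (4 / (3 + t ^ 2))) s = g_rational t s / (3 + t ^ 2) ^ 2.
Proof.
  assert (0 < 3 + t ^ 2) by nra.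
  unfold g_root, g_rational; field; lra.
Qed.

Lemma g_rational_nonneg (t s : R) : 3 <= t -> 0 <= s <= 1 / 2 -> 0 <= g_rational t s.
Proof.
  intros Ht Hs; set (u := t - 3).
  replace (g_rational t s) with
    (96 * (1 - 2 * s) + u * (192 * ((1 / 2 - s) * (3 / 2 - s)))
     + u ^ 2 * (144 * ((1 / 2 - s) * (2 / 3 - s)))
     + u ^ 3 * (4 - 20 * s + 32 * s ^ 2) + 2 * u ^ 4 * s ^ 2)
    by (unfold g_rational, u; field).
  assert (Hu : 0 <= u) by (unfold u; lra).
  assert (0 <= (1 / 2 - s) * (3 / 2 - s)) by nra.
  assert (0 <= (1 / 2 - s) * (2 / 3 - s)) by nra.
  assert (0 <= 4 - 20 * s + 32 * s ^ 2) by nra.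
  assert (0 <= u ^ 2) by (apply pow_le; lra).
  assert (0 <= u ^ 3) by (apply pow_le; lra).
  assert (0 <= u ^ 4 * s ^ 2) by (apply Rmult_le_pos; apply pow_le; lra).
  assert (0 <= u * ((1 / 2 - s) * (3 / 2 - s))) by nra.
  assert (0 <= u ^ 2 * ((1 / 2 - s) * (2 / 3 - s))) by nra.
  assert (0 <= u ^ 3 * (4 - 20 * s + 32 * s ^ 2)) by nra.
  lra.
Qed.

Lemma g_rational_sym_nonneg (t s : R) :
  3 <= t -> 0 <= g_rational t s + g_rational t (1 - s).
Proof.
  intros Ht; set (u := t - 3).
  replace (g_rational t s + g_rational t (1 - s)) with
    (96 * u * (1 - 2 * s) ^ 2 + 72 * u ^ 2 * (1 - 2 * s) ^ 2
     + u ^ 3 * (20 - 64 * s + 64 * s ^ 2) + u ^ 4 * (2 - 4 * s + 4 * s ^ 2))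
    by (unfold g_rational, u; field).
  assert (Hu : 0 <= u) by (unfold u; lra).
  assert (0 <= 20 - 64 * s + 64 * s ^ 2) by (pose proof (pow2_ge_0 (8 * s - 4)); nra).
  assert (0 <= 2 - 4 * s + 4 * s ^ 2) by (pose proof (pow2_ge_0 (2 * s - 1)); nra).
  assert (0 <= (1 - 2 * s) ^ 2) by apply pow2_ge_0.
  assert (0 <= u ^ 2) by (apply pow_le; lra).
  assert (0 <= u ^ 3) by (apply pow_le; lra).
  assert (0 <= u ^ 4) by (apply pow_le; lra).
  assert (0 <= u * (1 - 2 * s) ^ 2) by nra.
  assert (0 <= u ^ 2 * (1 - 2 * s) ^ 2) by nra.
  assert (0 <= u ^ 3 * (20 - 64 * s + 64 * s ^ 2)) by nra.
  assert (0 <= u ^ 4 * (2 - 4 * s + 4 * s ^ 2)) by nra.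
  lra.
Qed.

Section OnTheConic.

Variables a r : R.
Hypothesis a_range : 0 <= a <= 1 / 3.
Hypothesis r_nonneg : 0 <= r.
Hypothesis r_sqr : r * r = a * (4 - 3 * a).

Lemma le_root : a <= r.
Proof. nra. Qed.

(* [(2 - 3a)^2 - r^2 = 4(1 - a)(1 - 3a)]. *)
Lemma root_le : r <= 2 - 3 * a.
Proof. nra. Qed.

Lemma h_root_le_sym (s : R) : 0 <= s <= 1 / 2 -> h_root a r s <= h_root a r (1 - s).
Proof.
  intros Hs.
  assert (Hdiff : h_root a r (1 - s) - h_root a r s = (1 - 2 * s) * (2 - 3 * a - r) * (r - a) / 2)
    by (unfold h_root; field).
  pose proof le_root; pose proof root_le.
  assert (0 <= (1 - 2 * s) * (2 - 3 * a - r)) by nra.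
  nra.
Qed.

Lemma conic_rational_param :
  0 < a -> exists t, 3 <= t /\ a = 4 / (3 + t ^ 2) /\ r = t * a.
Proof.
  intros Ha; exists (r / a).
  assert (Ht : a * (3 + (r / a) ^ 2) = 4).
  { replace ((r / a) ^ 2) with (r * r / (a * a)) by (field; lra).
    rewrite r_sqr; field; lra. }
  split; [|split].
  - assert (9 <= (r / a) ^ 2) by nra.
    assert (0 <= r / a) by (apply Rle_mult_inv_pos; lra).
    nra.
  - rewrite <- Ht; field; nra.
  - field; lra.
Qed.

Lemma g_root_nonneg_and_sym (s : R) : 0 <= s <= 1 / 2 ->
  0 <= g_root a r s /\ 0 <= g_root a r s + g_root a r (1 - s).
Proof.
  intros Hs.
  destruct (Req_dec a 0) as [a0 | a_ne0].
  - assert (r = 0) by nra.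
    unfold g_root; split; nra.
  - destruct conic_rational_param as (t & Ht & -> & ->); [lra|].
    rewrite !g_root_rational.
    assert (0 < (3 + t ^ 2) ^ 2) by (apply pow_lt; nra).
    rewrite <- Rdiv_plus_distr; split; apply Rle_mult_inv_pos; try lra.
    + now apply g_rational_nonneg.
    + now apply g_rational_sym_nonneg.
Qed.

End OnTheConic.

Theorem lemmaB1 (a s : R) :
  0 <= a <= 1 / 3 -> 0 <= s <= 1 / 2 ->
  h a s <= h a (1 - s) /\ 0 <= g a s /\ 0 <= g a s + g a (1 - s).
Proof.
  intros Ha Hs.
  assert (Hsqr : Rr a * Rr a = a * (4 - 3 * a)) by (apply Rr_sqr; lra).
  rewrite !h_root_Rr, !g_root_Rr.
  split.
  - exact (h_root_le_sym a (Rr a) Ha (Rr_nonneg a) Hsqr s Hs).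
  - exact (g_root_nonneg_and_sym a (Rr a) Ha (Rr_nonneg a) Hsqr s Hs).
Qed.
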